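(* Let $h>0$ and $I(S,C)=\log\frac{1+hS}{1+hSe^{-C}}$ on $S>0$, $C>0$. Then the Hessian of $I$ at $(S,C)$ is negative semidefinite if and only if $$C\ge \log\left(2+\frac{1}{hS}\right).$$ The boundary of this region is parametrized by $\lambda_c\in(0,1)$ as $hS=\frac{\sqrt{\lambda_c}}{1-\sqrt{\lambda_c}}$, $e^{-C}=\frac{\sqrt{\lambda_c}}{1+\sqrt{\lambda_c}}$, and $C\to\log 2$ as $\lambda_c\to 1$. In particular, for every $S>0$ and every $C\in(0,\log 2)$ the Hessian of $I$ at $(S,C)$ is not negative semidefinite.
   Context: Logarithms are natural. $I(S,C)$ is the mutual information spectral density (nats/sec/Hz) at a frequency with power gain $h$, input power density $S$ and fronthaul rate density $C$. *)

From Stdlib Require Import Reals.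
Open Scope R_scope.

Definition Ifun (h S C : R) : R := ln ((1 + h * S) / (1 + h * S * exp (- C))).

Definition partialS (f : R -> R -> R) (S C l : R) : Prop :=
  derivable_pt_lim (fun s => f s C) S l.
Definition partialC (f : R -> R -> R) (S C l : R) : Prop :=
  derivable_pt_lim (fun c => f S c) C l.

Definition hessian_at (f : R -> R -> R) (S C hSS hSC hCS hCC : R) : Prop :=
  exists fS fC : R -> R -> R,
    (forall s c, 0 < s -> 0 < c -> partialS f s c (fS s c) /\ partialC f s c (fC s c)) /\
    partialS fS S C hSS /\ partialC fS S C hSC /\
    partialS fC S C hCS /\ partialC fC S C hCC.

Definition nsd2 (a b c d : R) : Prop :=
  forall v1 v2 : R, v1 * (a * v1 + b * v2) + v2 * (c * v1 + d * v2) <= 0.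

Definition hessian_nsd (f : R -> R -> R) (S C : R) : Prop :=
  exists a b c d, hessian_at f S C a b c d /\ nsd2 a b c d.

(** With [x = h S] and [u = exp (- C) < 1], the second [S]-derivative of [I]
    is negative, so the Hessian is negative semidefinite exactly when its
    determinant is nonnegative.  The determinant has the sign of
    [x - (2 x + 1) u], and [(2 x + 1) u <= x] is [C >= ln (2 + 1/x)].  On the
    boundary [u = x / (2 x + 1)], which [sqrt lam = x / (1 + x)] parametrizes;
    as [ln (2 + 1/x) > ln 2], no point with [C < ln 2] is in the region. *)

From Stdlib Require Import Reals Lra ssreflect.
From Coquelicot Require Import Coquelicot.
Open Scope R_scope.

Lemma derivable_pt_lim_unique_loc (f g : R -> R) (x l1 l2 : R) :
  locally x (fun t => f t = g t) ->
  derivable_pt_lim f x l1 -> derivable_pt_lim g x l2 -> l1 = l2.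
Proof.
move=> efg /is_derive_Reals df /is_derive_Reals dg.
rewrite -(is_derive_unique _ _ _ dg).
symmetry; exact/is_derive_unique/(is_derive_ext_loc _ _ _ _ efg).
Qed.

Section HessianOnQuadrant.

Variables (f gS gC gSS gSC gCS gCC : R -> R -> R).

Hypothesis df : forall s c, 0 < s -> 0 < c ->
  partialS f s c (gS s c) /\ partialC f s c (gC s c).
Hypothesis dgS : forall s c, 0 < s -> 0 < c ->
  partialS gS s c (gSS s c) /\ partialC gS s c (gSC s c).
Hypothesis dgC : forall s c, 0 < s -> 0 < c ->
  partialS gC s c (gCS s c) /\ partialC gC s c (gCC s c).

Lemma partials_eq_on_quadrant (fS fC : R -> R -> R) (S C : R) :
  0 < S -> 0 < C ->
  (forall s c, 0 < s -> 0 < c -> partialS f s c (fS s c) /\ partialC f s c (fC s c)) ->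
  locally S (fun s => fS s C = gS s C) /\ locally C (fun c => fS S c = gS S c) /\
  locally S (fun s => fC s C = gC s C) /\ locally C (fun c => fC S c = gC S c).
Proof.
move=> S0 C0 dfF.
have eqS s c : 0 < s -> 0 < c -> fS s c = gS s c.
  move=> s0 c0; apply: (uniqueness_limite (fun s => f s c) s).
  - exact: (proj1 (dfF s c s0 c0)).
  - exact: (proj1 (df s c s0 c0)).
have eqC s c : 0 < s -> 0 < c -> fC s c = gC s c.
  move=> s0 c0; apply: (uniqueness_limite (fun c => f s c) c).
  - exact: (proj2 (dfF s c s0 c0)).
  - exact: (proj2 (df s c s0 c0)).
have posS := open_gt 0 S S0; have posC := open_gt 0 C C0.
by split; [|split; [|split]];
  [apply: filter_imp posS | apply: filter_imp posC | apply: filter_imp posS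
  | apply: filter_imp posC] => t t0 /=; auto.
Qed.

Lemma hessian_at_iff (S C a b c d : R) : 0 < S -> 0 < C ->
  hessian_at f S C a b c d <->
  a = gSS S C /\ b = gSC S C /\ c = gCS S C /\ d = gCC S C.
Proof.
move=> S0 C0; split.
- move=> [fS [fC [dfF [dSS [dSC [dCS dCC]]]]]].
  have [eS [eS' [eC eC']]] := partials_eq_on_quadrant fS fC S C S0 C0 dfF.
  have [gSS' gSC'] := dgS S C S0 C0; have [gCS' gCC'] := dgC S C S0 C0.
  split; [|split; [|split]].
  - exact: (derivable_pt_lim_unique_loc _ _ _ _ _ eS dSS gSS').
  - exact: (derivable_pt_lim_unique_loc _ _ _ _ _ eS' dSC gSC').
  - exact: (derivable_pt_lim_unique_loc _ _ _ _ _ eC dCS gCS').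
  - exact: (derivable_pt_lim_unique_loc _ _ _ _ _ eC' dCC gCC').
- move=> [-> [-> [-> ->]]]; exists gS, gC.
  have [? ?] := dgS S C S0 C0; have [? ?] := dgC S C S0 C0.
  by split; [exact: df | repeat split].
Qed.

Lemma hessian_nsd_iff (S C : R) : 0 < S -> 0 < C ->
  hessian_nsd f S C <-> nsd2 (gSS S C) (gSC S C) (gCS S C) (gCC S C).
Proof.
move=> S0 C0; split.
- by move=> [a [b [c [d [/(hessian_at_iff _ _ _ _ _ _ S0 C0) [-> [-> [-> ->]]] n]]]]].
- move=> n; exists (gSS S C), (gSC S C), (gCS S C), (gCC S C); split => //.
  exact/(hessian_at_iff _ _ _ _ _ _ S0 C0).
Qed.

End HessianOnQuadrant.

Lemma nsd2_sym_iff (a b d : R) : a < 0 -> nsd2 a b b d <-> 0 <= a * d - b * b.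
Proof.
move=> a0; split.
- move=> n; have := n b (- a).
  have -> : b * (a * b + b * - a) + - a * (b * b + d * - a) = a * (a * d - b * b)
    by ring.
  nra.
- move=> det v1 v2.
  have sq : a * (v1 * (a * v1 + b * v2) + v2 * (b * v1 + d * v2))
            = (a * v1 + b * v2) ^ 2 + (a * d - b * b) * v2 ^ 2 by ring.
  have : 0 <= a * (v1 * (a * v1 + b * v2) + v2 * (b * v1 + d * v2)).
    rewrite sq; apply: Rplus_le_le_0_compat; first exact: pow2_ge_0.
    by apply: Rmult_le_pos => //; apply: pow2_ge_0.
  nra.
Qed.

Definition Ifun_dS (h s c : R) : R :=
  h / (1 + h * s) - h * exp (- c) / (1 + h * s * exp (- c)).
Definition Ifun_dC (h s c : R) : R := h * s * exp (- c) / (1 + h * s * exp (- c)).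
Definition Ifun_dSS (h s c : R) : R :=
  - (h * h) / ((1 + h * s) * (1 + h * s))
  + h * h * exp (- c) * exp (- c) / ((1 + h * s * exp (- c)) * (1 + h * s * exp (- c))).
Definition Ifun_dSC (h s c : R) : R :=
  h * exp (- c) / ((1 + h * s * exp (- c)) * (1 + h * s * exp (- c))).
Definition Ifun_dCC (h s c : R) : R :=
  - (h * s * exp (- c)) / ((1 + h * s * exp (- c)) * (1 + h * s * exp (- c))).

Section IfunDerivatives.

Variables (h s c : R).
Hypotheses (h0 : 0 < h) (s0 : 0 < s).

Let hs0 : 0 < 1 + h * s.
Proof. have := Rmult_lt_0_compat h s h0 s0; lra. Qed.

Let hsu0 : 0 < 1 + h * s * exp (- c).
Proof.
have := Rmult_lt_0_compat _ _ (Rmult_lt_0_compat h s h0 s0) (exp_pos (- c)); lra.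
Qed.

Lemma Ifun_partialS : partialS (Ifun h) s c (Ifun_dS h s c).
Proof.
apply/is_derive_Reals; rewrite /Ifun /Ifun_dS; auto_derive.
- by repeat split; try lra; apply: Rdiv_lt_0_compat.
- by field; lra.
Qed.

Lemma Ifun_partialC : partialC (Ifun h) s c (Ifun_dC h s c).
Proof.
apply/is_derive_Reals; rewrite /Ifun /Ifun_dC; auto_derive.
- by repeat split; try lra; apply: Rdiv_lt_0_compat.
- by field; lra.
Qed.

Lemma Ifun_dS_partialS : partialS (Ifun_dS h) s c (Ifun_dSS h s c).
Proof.
apply/is_derive_Reals; rewrite /Ifun_dS /Ifun_dSS; auto_derive.
- by repeat split; lra.
- by field; lra.
Qed.

Lemma Ifun_dS_partialC : partialC (Ifun_dS h) s c (Ifun_dSC h s c).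
Proof.
apply/is_derive_Reals; rewrite /Ifun_dS /Ifun_dSC; auto_derive.
- by repeat split; lra.
- by field; lra.
Qed.

Lemma Ifun_dC_partialS : partialS (Ifun_dC h) s c (Ifun_dSC h s c).
Proof.
apply/is_derive_Reals; rewrite /Ifun_dC /Ifun_dSC; auto_derive.
- by repeat split; lra.
- by field; lra.
Qed.

Lemma Ifun_dC_partialC : partialC (Ifun_dC h) s c (Ifun_dCC h s c).
Proof.
apply/is_derive_Reals; rewrite /Ifun_dC /Ifun_dCC; auto_derive.
- by repeat split; lra.
- by field; lra.
Qed.

End IfunDerivatives.

Lemma Ifun_hessian_nsd_iff (h S C : R) : 0 < h -> 0 < S -> 0 < C ->
  hessian_nsd (Ifun h) S C <->
  nsd2 (Ifun_dSS h S C) (Ifun_dSC h S C) (Ifun_dSC h S C) (Ifun_dCC h S C).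
Proof.
move=> h0 S0 C0.
apply: (hessian_nsd_iff (Ifun h) (Ifun_dS h) (Ifun_dC h)) => // s c s0 _; split.
- exact: Ifun_partialS.
- exact: Ifun_partialC.
- exact: Ifun_dS_partialS.
- exact: Ifun_dS_partialC.
- exact: Ifun_dC_partialS.
- exact: Ifun_dC_partialC.
Qed.

Lemma hessian_entries_nsd_iff (h x u : R) : 0 < h -> 0 < x -> 0 < u < 1 ->
  nsd2 (- (h * h) / ((1 + x) * (1 + x)) + h * h * u * u / ((1 + x * u) * (1 + x * u)))
       (h * u / ((1 + x * u) * (1 + x * u))) (h * u / ((1 + x * u) * (1 + x * u)))
       (- (x * u) / ((1 + x * u) * (1 + x * u)))
  <-> (2 * x + 1) * u <= x.
Proof.
move=> h0 x0 [u0 u1].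
have xu0 : 0 < x * u by nra.
set a := _ + _; set b := h * u / _; set d := - _ / _.
have a_eq : a = h * h * (u - 1) * (u * (1 + x) + (1 + x * u))
                / ((1 + x) ^ 2 * (1 + x * u) ^ 2)
  by rewrite /a; field; lra.
have det_eq : a * d - b * b = h * h * u * (x - (2 * x + 1) * u)
                              / ((1 + x * u) ^ 3 * (1 + x) ^ 2)
  by rewrite /a /b /d; field; lra.
have den0 : 0 < (1 + x * u) ^ 3 * (1 + x) ^ 2
  by apply: Rmult_lt_0_compat; apply: pow_lt; lra.
have hhu0 : 0 < h * h * u by apply: Rmult_lt_0_compat; nra.
rewrite nsd2_sym_iff; last first.
  rewrite a_eq; apply: Rdiv_neg_pos.
  - have : 0 < h * h * (u * (1 + x) + (1 + x * u)) by nra.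
    nra.
  - by apply: Rmult_lt_0_compat; apply: pow_lt; lra.
rewrite det_eq; split => [det0 | le_xu].
- have : 0 <= h * h * u * (x - (2 * x + 1) * u).
    have -> : h * h * u * (x - (2 * x + 1) * u)
              = (h * h * u * (x - (2 * x + 1) * u) / ((1 + x * u) ^ 3 * (1 + x) ^ 2))
                * ((1 + x * u) ^ 3 * (1 + x) ^ 2) by field; lra.
    by apply: Rmult_le_pos; lra.
  nra.
- by apply: Rdiv_le_0_compat => //; apply: Rmult_le_pos; lra.
Qed.

Lemma ln_le_iff_le_exp (y C : R) : 0 < y -> ln y <= C <-> y <= exp C.
Proof.
move=> y0; split => [le_lnC | le_exp].
- rewrite -(exp_ln y y0).
  case: (Rle_lt_or_eq _ _ le_lnC) => [lt_lnC | ->]; last exact: Rle_refl.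
  exact/Rlt_le/exp_increasing.
- by rewrite -[C]ln_exp; apply: ln_le.
Qed.

Lemma exp_neg_le_iff (x C : R) : 0 < x ->
  (2 * x + 1) * exp (- C) <= x <-> C >= ln (2 + 1 / x).
Proof.
move=> x0.
have y0 : 0 < 2 + 1 / x.
  have : 0 < 1 / x by apply: Rdiv_lt_0_compat; lra.
  lra.
have E0 := exp_pos C.
have xy : x * (2 + 1 / x) = 2 * x + 1 by field; lra.
have EiE : exp C * exp (- C) = 1 by rewrite exp_Ropp; field; lra.
have : (2 * x + 1) * exp (- C) <= x <-> 2 + 1 / x <= exp C.
  split => le_y.
  - apply: (Rmult_le_reg_l x) => //; rewrite xy.
    have := Rmult_le_compat_l _ _ _ (Rlt_le _ _ E0) le_y; nra.
  - have := Rmult_le_compat_l _ _ _ (Rlt_le _ _ x0) le_y.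
    rewrite xy => le_x; have := exp_pos (- C); nra.
move=> ->; rewrite -ln_le_iff_le_exp //; split; lra.
Qed.

Lemma Ifun_hessian_nsd_boundary (h S C : R) : 0 < h -> 0 < S -> 0 < C ->
  hessian_nsd (Ifun h) S C <-> C >= ln (2 + 1 / (h * S)).
Proof.
move=> h0 S0 C0.
have x0 : 0 < h * S by nra.
have u1 : exp (- C) < 1 by rewrite -exp_0; apply: exp_increasing; lra.
rewrite Ifun_hessian_nsd_iff // -exp_neg_le_iff //.
exact: (hessian_entries_nsd_iff h (h * S) (exp (- C)) h0 x0 (conj (exp_pos _) u1)).
Qed.

Lemma boundary_of_param (x C s : R) : 0 < s < 1 ->
  x = s / (1 - s) -> exp (- C) = s / (1 + s) ->
  0 < x /\ 0 < C /\ C = ln (2 + 1 / x).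
Proof.
move=> [s0 s1] ->  eC; split; first by apply: Rdiv_lt_0_compat; lra.
split.
- have : exp (- C) < exp 0.
    rewrite exp_0 eC; apply: (Rmult_lt_reg_r (1 + s)); first lra.
    by rewrite /Rdiv Rmult_assoc Rinv_l; lra.
  move/exp_lt_inv; lra.
- have -> : 2 + 1 / (s / (1 - s)) = / exp (- C) by rewrite eC; field; lra.
  by rewrite ln_Rinv ?ln_exp; [ring | apply: exp_pos].
Qed.

Lemma param_of_boundary (x C : R) : 0 < x -> C = ln (2 + 1 / x) ->
  exists s, 0 < s < 1 /\ x = s / (1 - s) /\ exp (- C) = s / (1 + s).
Proof.
move=> x0 ->; exists (x / (1 + x)); split; [split|split].
- by apply: Rdiv_lt_0_compat; lra.
- apply: (Rmult_lt_reg_r (1 + x)); first lra.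
  by rewrite /Rdiv Rmult_assoc Rinv_l; lra.
- by field; lra.
- rewrite exp_Ropp exp_ln; first by field; lra.
  have : 0 < 1 / x by apply: Rdiv_lt_0_compat; lra.
  lra.
Qed.

Lemma sqrt_in_unit_interval (lam : R) : 0 < lam < 1 -> 0 < sqrt lam < 1.
Proof.
move=> [l0 l1]; split; first by apply: sqrt_lt_R0.
by rewrite -sqrt_1; apply: sqrt_lt_1_alt; lra.
Qed.

Lemma ln2_lt_boundary (x : R) : 0 < x -> ln 2 < ln (2 + 1 / x).
Proof.
move=> x0; apply: ln_increasing; first lra.
have : 0 < 1 / x by apply: Rdiv_lt_0_compat; lra.
lra.
Qed.

Lemma boundary_C_limit_1 :
  limit1_in (fun lam => - ln (sqrt lam / (1 + sqrt lam))) (fun lam => 0 < lam < 1)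
            (ln 2) 1.
Proof.
have cont : continuity_pt (fun lam => - ln (sqrt lam / (1 + sqrt lam))) 1.
  apply/continuity_pt_filterlim/ex_derive_continuous.
  by auto_derive; rewrite sqrt_1; repeat split; lra.
have value : - ln (sqrt 1 / (1 + sqrt 1)) = ln 2.
  rewrite sqrt_1 (_ : 1 / (1 + 1) = / 2); last by field.
  by rewrite ln_Rinv; [ring | lra].
rewrite -value; apply: limit1_imp cont => lam [_ lam1].
by split; [exact: I | lra].
Qed.

Theorem mainTheorem4 (h : R) (hpos : 0 < h) :
  (forall S C, 0 < S -> 0 < C ->
     (hessian_nsd (Ifun h) S C <-> C >= ln (2 + 1 / (h * S)))) /\
  (forall lam S C, 0 < lam < 1 ->
     h * S = sqrt lam / (1 - sqrt lam) ->
     exp (- C) = sqrt lam / (1 + sqrt lam) ->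
     0 < S /\ 0 < C /\ C = ln (2 + 1 / (h * S))) /\
  (forall S C, 0 < S -> C = ln (2 + 1 / (h * S)) ->
     exists lam, 0 < lam < 1 /\
       h * S = sqrt lam / (1 - sqrt lam) /\
       exp (- C) = sqrt lam / (1 + sqrt lam)) /\
  limit1_in (fun lam => - ln (sqrt lam / (1 + sqrt lam))) (fun lam => 0 < lam < 1) (ln 2) 1 /\
  (forall S C, 0 < S -> 0 < C < ln 2 -> ~ hessian_nsd (Ifun h) S C).
Proof.
split; [|split; [|split; [|split]]].
- by move=> S C; apply: Ifun_hessian_nsd_boundary.
- move=> lam S C /sqrt_in_unit_interval s01 eS eC.
  have [x0 [C0 eC_boundary]] := boundary_of_param _ _ _ s01 eS eC.
  by split; first nra.
- move=> S C S0 eC.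
  have [s [[s0 s1] [eS eC']]] := param_of_boundary _ _ (Rmult_lt_0_compat _ _ hpos S0) eC.
  exists (s * s); rewrite sqrt_square; last lra.
  by split; [split; nra | split].
- exact: boundary_C_limit_1.
- move=> S C S0 [C0 C_lt] /(Ifun_hessian_nsd_boundary _ _ _ hpos S0 C0).
  have := ln2_lt_boundary _ (Rmult_lt_0_compat _ _ hpos S0); lra.
Qed.
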